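(* Let $X$ be a non-empty metric space and let $\mathcal{U}$ be a cover of $X$ (not necessarily open). Then \[ L(\mathcal{U})\leq L_{Diam}(\mathcal{U})\leq 2\cdot L(\mathcal{U}). \]
   Context: For $x\in X$ and $S\subseteq X$, $\operatorname{dist}(x,S)=\inf_{z\in S}d(x,z)$, with $\operatorname{dist}(x,\emptyset)=\infty$. For a cover $\mathcal{U}$ of $X$ (i.e. $X=\bigcup\mathcal{U}$): $L(\mathcal{U},x):=\sup_{U\in\mathcal{U}}\operatorname{dist}(x,X\setminus U)$ and $L(\mathcal{U}):=\inf_{x\in X}L(\mathcal{U},x)$. Also $L_{Diam}(\mathcal{U}):=\sup\{D\geq 0 \mid \text{for every } A\subseteq X \text{ with } \operatorname{diam}A\leq D \text{ there exists } U\in\mathcal{U} \text{ with } A\subseteq U\}$. All these quantities take values in $[0,\infty]$. *)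

From Stdlib Require Import Reals.
From Coquelicot Require Import Coquelicot.
Open Scope R_scope.

Definition is_metric {X : Type} (d : X -> X -> R) : Prop :=
  (forall x y, 0 <= d x y) /\
  (forall x y, d x y = 0 <-> x = y) /\
  (forall x y, d x y = d y x) /\
  (forall x y z, d x z <= d x y + d y z).

Definition is_cover {X : Type} (U : (X -> Prop) -> Prop) : Prop :=
  forall x : X, exists V, U V /\ V x.

(* dist(x,S) = inf_{z in S} d(x,z), with inf of the empty set = +oo. *)
Definition dist {X : Type} (d : X -> X -> R) (x : X) (S : X -> Prop) : Rbar :=
  Rbar_glb (fun r => exists z, S z /\ r = Finite (d x z)).

Definition Lx {X : Type} (d : X -> X -> R) (U : (X -> Prop) -> Prop) (x : X) : Rbar :=
  Rbar_lub (fun r => exists V, U V /\ r = dist d x (fun z => ~ V z)).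

Definition L {X : Type} (d : X -> X -> R) (U : (X -> Prop) -> Prop) : Rbar :=
  Rbar_glb (fun r => exists x, r = Lx d U x).

(* diam A = sup_{a,b in A} d(a,b) (= -oo for empty A; irrelevant below). *)
Definition diam {X : Type} (d : X -> X -> R) (A : X -> Prop) : Rbar :=
  Rbar_lub (fun r => exists a b, A a /\ A b /\ r = Finite (d a b)).

Definition LDiam {X : Type} (d : X -> X -> R) (U : (X -> Prop) -> Prop) : Rbar :=
  Rbar_lub (fun r => exists D : R, 0 <= D /\ r = Finite D /\
    forall A : X -> Prop, Rbar_le (diam d A) (Finite D) ->
      exists V, U V /\ forall z, A z -> V z).

(** If every point [a] has a member [V] of the cover with [dist(a, X \ V) > D],
    then a set of diameter at most [D] containing [a] lies in the closed
    [D]-ball around [a], hence in [V]: so [L <= L_Diam].  Conversely, if every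
    set of diameter at most [D] lies in a member of the cover, so does the
    closed [D/2]-ball around any [x]; points outside that member are then at
    distance more than [D/2] from [x]: so [L_Diam <= 2 L]. *)
From Pilot Require Import Defs.
From Stdlib Require Import Reals.
From Coquelicot Require Import Coquelicot.
From Stdlib Require Import Lra Classical.
Open Scope R_scope.

Lemma Rbar_lub_ub (E : Rbar -> Prop) (x : Rbar) : E x -> Rbar_le x (Rbar_lub E).
Proof. exact (proj1 (proj2_sig (Rbar_ex_lub E)) x). Qed.

Lemma Rbar_lub_le (E : Rbar -> Prop) (b : Rbar) :
  (forall x, E x -> Rbar_le x b) -> Rbar_le (Rbar_lub E) b.
Proof. exact (proj2 (proj2_sig (Rbar_ex_lub E)) b). Qed.

Lemma Rbar_glb_lb (E : Rbar -> Prop) (x : Rbar) : E x -> Rbar_le (Rbar_glb E) x.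
Proof. exact (proj1 (proj2_sig (Rbar_ex_glb E)) x). Qed.

Lemma Rbar_glb_ge (E : Rbar -> Prop) (b : Rbar) :
  (forall x, E x -> Rbar_le b x) -> Rbar_le b (Rbar_glb E).
Proof. exact (proj2 (proj2_sig (Rbar_ex_glb E)) b). Qed.

Lemma Rbar_lub_gt (E : Rbar -> Prop) (D : Rbar) :
  Rbar_lt D (Rbar_lub E) -> exists x, E x /\ Rbar_lt D x.
Proof.
  intros HD. apply NNPP. intros Hnone.
  apply (Rbar_lt_not_le _ _ HD), Rbar_lub_le. intros x Ex.
  destruct (Rbar_le_dec x D) as [le|nle]; [exact le|].
  exfalso. apply Hnone. exists x. split; [exact Ex|]. now apply Rbar_not_le_lt.
Qed.

Lemma Rbar_le_of_finite_lt (a b : Rbar) :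
  (forall D : R, Rbar_lt (Finite D) a -> Rbar_le (Finite D) b) -> Rbar_le a b.
Proof.
  intros H. destruct a as [l| |], b as [m| |]; simpl in *; auto.
  - destruct (Rle_dec l m) as [le|nle]; [exact le|].
    specialize (H ((l + m) / 2) ltac:(lra)). lra.
  - apply (H (l - 1)). lra.
  - specialize (H (m + 1) I). lra.
  - apply (H 0 I).
Qed.

Lemma Rbar_le_mult2 (D : R) (l : Rbar) :
  Rbar_le (Finite (D / 2)) l -> Rbar_le (Finite D) (Rbar_mult (Finite 2) l).
Proof.
  destruct l as [l| |]; simpl; try tauto; intros H.
  - lra.
  - destruct Rle_dec as [h|h]; [destruct Rle_lt_or_eq_dec|]; simpl; auto; lra.
Qed.

Definition diam_fits {X : Type} (d : X -> X -> R) (U : (X -> Prop) -> Prop) (D : R) : Prop :=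
  forall A : X -> Prop, Rbar_le (diam d A) (Finite D) ->
    exists V, U V /\ forall z, A z -> V z.

Section CoverInequalities.

Variables (X : Type) (d : X -> X -> R) (U : (X -> Prop) -> Prop).
Hypothesis Hd : is_metric d.
Hypothesis HU : is_cover U.

Lemma diam_ge (A : X -> Prop) (a b : X) :
  A a -> A b -> Rbar_le (Finite (d a b)) (diam d A).
Proof. intros Aa Ab. apply Rbar_lub_ub. now exists a, b. Qed.

Lemma diam_ball_le (x : X) (r : R) :
  Rbar_le (diam d (fun z => d x z <= r)) (Finite (2 * r)).
Proof.
  destruct Hd as [_ [_ [Hsym Htri]]].
  apply Rbar_lub_le. intros s [a [b [Ha [Hb ->]]]]. simpl.
  specialize (Htri a x b). rewrite (Hsym a x) in Htri. lra.
Qed.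

Lemma dist_le (x z : X) (S : X -> Prop) : S z -> Rbar_le (Defs.dist d x S) (Finite (d x z)).
Proof. intros Sz. apply Rbar_glb_lb. now exists z. Qed.

Lemma dist_compl_ge (x : X) (r : R) (V : X -> Prop) :
  (forall z, d x z <= r -> V z) -> Rbar_le (Finite r) (Defs.dist d x (fun z => ~ V z)).
Proof.
  intros ball_in_V. apply Rbar_glb_ge. intros s [z [nVz ->]]. simpl.
  destruct (Rle_dec (d x z) r) as [le|nle]; [now exfalso; apply nVz, ball_in_V | lra].
Qed.

Lemma dist_le_Lx (x : X) (V : X -> Prop) :
  U V -> Rbar_le (Defs.dist d x (fun z => ~ V z)) (Lx d U x).
Proof. intros UV. apply Rbar_lub_ub. now exists V. Qed.

Lemma L_le_Lx (x : X) : Rbar_le (L d U) (Lx d U x).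
Proof. apply Rbar_glb_lb. now exists x. Qed.

Lemma subset_of_dist_compl_gt (A V : X -> Prop) (a : X) (D : R) :
  Rbar_lt (Finite D) (Defs.dist d a (fun z => ~ V z)) ->
  Rbar_le (diam d A) (Finite D) -> A a -> forall z, A z -> V z.
Proof.
  intros HV HA Aa z Az. apply NNPP. intros nVz.
  apply (Rbar_lt_not_le _ _ HV).
  apply Rbar_le_trans with (Finite (d a z)); [now apply dist_le|].
  exact (Rbar_le_trans _ _ _ (diam_ge A a z Aa Az) HA).
Qed.

(** The empty set needs a member of the cover too, which exists since [X] is inhabited. *)
Lemma diam_fits_of_points (x0 : X) (D : R) :
  (forall A a, Rbar_le (diam d A) (Finite D) -> A a -> exists V, U V /\ forall z, A z -> V z) ->
  diam_fits d U D.
Proof.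
  intros Hpt A HA.
  destruct (classic (exists a, A a)) as [[a Aa]|Hempty]; [exact (Hpt A a HA Aa)|].
  destruct (HU x0) as [V [UV _]]. exists V. split; [exact UV|].
  intros z Az. exfalso. apply Hempty. now exists z.
Qed.

Lemma diam_fits0 (x0 : X) : diam_fits d U 0.
Proof.
  destruct Hd as [Hpos [Hzero _]].
  apply (diam_fits_of_points x0). intros A a HA Aa.
  destruct (HU a) as [V [UV Va]]. exists V. split; [exact UV|].
  intros z Az. assert (daz : Rbar_le (Finite (d a z)) (Finite 0)).
  { exact (Rbar_le_trans _ _ _ (diam_ge A a z Aa Az) HA). }
  simpl in daz. assert (a = z) as <-; [apply Hzero; specialize (Hpos a z); lra | exact Va].
Qed.

Lemma diam_fits_of_lt_L (x0 : X) (D : R) : Rbar_lt (Finite D) (L d U) -> diam_fits d U D.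
Proof.
  intros HD. apply (diam_fits_of_points x0). intros A a HA Aa.
  destruct (Rbar_lub_gt _ _ (Rbar_lt_le_trans _ _ _ HD (L_le_Lx a)))
    as [r [[V [UV ->]] HV]].
  exists V. split; [exact UV|]. exact (subset_of_dist_compl_gt A V a D HV HA Aa).
Qed.

Lemma LDiam_ge (D : R) : 0 <= D -> diam_fits d U D -> Rbar_le (Finite D) (LDiam d U).
Proof. intros D0 HD. apply Rbar_lub_ub. now exists D. Qed.

Lemma half_le_L (D : R) : diam_fits d U D -> Rbar_le (Finite (D / 2)) (L d U).
Proof.
  intros HD. apply Rbar_glb_ge. intros r [x ->].
  destruct (HD (fun z => d x z <= D / 2)) as [V [UV ball_in_V]].
  { eapply Rbar_le_trans; [apply diam_ball_le | simpl; lra]. }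
  exact (Rbar_le_trans _ _ _ (dist_compl_ge x _ V ball_in_V) (dist_le_Lx x V UV)).
Qed.

End CoverInequalities.

Theorem lemma2p10 (X : Type) (d : X -> X -> R) (U : (X -> Prop) -> Prop)
  (Hd : is_metric d) (Hne : inhabited X) (HU : is_cover U) :
  Rbar_le (L d U) (LDiam d U) /\
  Rbar_le (LDiam d U) (Rbar_mult (Finite 2) (L d U)).
Proof.
  destruct Hne as [x0]. split.
  - apply Rbar_le_of_finite_lt. intros D HD.
    destruct (Rle_dec 0 D) as [D0|D0].
    + apply LDiam_ge; [exact D0 | now apply diam_fits_of_lt_L].
    + apply Rbar_le_trans with (Finite 0); [simpl; lra|].
      apply LDiam_ge; [apply Rle_refl | now apply diam_fits0].
  - apply Rbar_lub_le. intros r [D [_ [-> HD]]].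
    apply Rbar_le_mult2. now apply half_le_L.
Qed.
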